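(* (i) For every even $n$ and every integer $k$ with $4\le k\le n$, every one-factorization of $K_n$ has a set $S$ of $k$ vertices with deficit $D(S)\ge k-3$. (ii) For every integer $d\ge -2$ there are $C>0$ and $n_0$ such that for every even $n\ge n_0$, every one-factorization of $K_n$ has a set $S$ of $k\le C\log n$ vertices (for some $k\ge1$) with deficit $D(S)\ge k+d$.
   Context: A one-factorization of $K_n$ ($n$ even) is a proper edge-coloring of $K_n$ with $n-1$ colors, so each color class is a perfect matching. For a set $S$ of vertices, $\gamma(S)$ is the number of distinct colors appearing on edges with both endpoints in $S$, and the deficit of $S$ is $D(S)=\binom{|S|}{2}-\gamma(S)$. *)

From Stdlib Require Import Reals.
From HB Require Import structures.
From mathcomp Require Import all_boot all_order all_algebra.

Set Implicit Arguments. Unset Strict Implicit. Unset Printing Implicit Defensive.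

(* Vertices of K_n are 'I_n; colors are 'I_(n.-1) (n-1 colors).
   c u v is the color of the edge {u,v} (for u != v; c u u is irrelevant). *)
Definition one_factorization (n : nat) (c : 'I_n -> 'I_n -> 'I_n.-1) : Prop :=
  (forall u v : 'I_n, c u v = c v u) /\
  (forall u v w : 'I_n, u != v -> u != w -> c u v = c u w -> v = w).

Definition gamma (n : nat) (c : 'I_n -> 'I_n -> 'I_n.-1) (S : {set 'I_n}) : nat :=
  #|[set c u v | u in S, v in S & u != v]|.

Definition deficit (n : nat) (c : 'I_n -> 'I_n -> 'I_n.-1) (S : {set 'I_n}) : int :=
  ('C(#|S|, 2))%:Z - (gamma c S)%:Z.

From Stdlib Require Import Reals Lra.
From HB Require Import structures.
From mathcomp Require Import all_boot all_order all_algebra zify.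

Set Implicit Arguments. Unset Strict Implicit. Unset Printing Implicit Defensive.

(* (i) Grow S greedily. If some vertex outside S sends to S an edge whose colour already occurs
   in S, adding that vertex raises the deficit by at least one. Otherwise no colour of S occurs
   on an edge leaving S, so every colour of S is seen at a single vertex of S; then
   gamma(S) <= |S| - 1, and the deficit stays large enough when any vertex is added.

   (ii) Fix t colours: their colour classes form a t-regular graph G. While a ball around a vertex
   of G spans fewer than |ball| - 1 + s edges, counting the edges leaving it shows that the next
   ball is larger by a factor 3/2, so some ball of radius O(log n) has excess s. The endpoints of
   s non-tree edges of a BFS tree, with their tree paths to the centre, form a set S of
   O(s log n) vertices spanning at least |S| - 1 + s edges of G. These carry at most t colours,
   so D(S) >= |S| - 1 + s - t. *)

Section Counting.
Variable T : finType.

Lemma card_pairs (P : T -> T -> bool) :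
  #|[set p : T * T | P p.1 p.2]| = (\sum_x #|[set y | P x y]|)%N.
Proof.
rewrite -sum1_card (eq_bigl (fun p : T * T => true && P p.1 p.2)); last first.
  by move=> p; rewrite inE.
rewrite -(pair_big_dep (fun _ => true) P (fun _ _ => 1%N)).
by apply: eq_bigr => x _; rewrite -sum1_card; apply: eq_bigl => y; rewrite inE.
Qed.

Lemma card_pairs_swap (P : T -> T -> bool) :
  #|[set p : T * T | P p.1 p.2]| = #|[set p : T * T | P p.2 p.1]|.
Proof.
rewrite -(card_imset [set p : T * T | P p.1 p.2] (can_inj swap_pairK)).
apply: eq_card => -[a b]; rewrite inE /=.
apply/imsetP/idP => [[[x y]] + [-> ->]|h]; first by rewrite inE.
by exists (b, a); rewrite ?inE.
Qed.

Lemma card_offdiag (S : {set T}) :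
  #|[set p : T * T | [&& p.1 \in S, p.2 \in S & p.1 != p.2]]| = (#|S| * #|S|.-1)%N.
Proof.
rewrite (card_pairs (fun a b => [&& a \in S, b \in S & a != b])) (bigID (fun x => x \in S)) /=.
rewrite addnC big1 => [|x xS]; last first.
  by apply/eqP; rewrite cards_eq0; apply/eqP/setP=> y; rewrite !inE (negbTE xS).
rewrite add0n -sum_nat_const; apply: eq_bigr => x xS.
by rewrite [#|S|](cardsD1 x) xS; apply: eq_card => y; rewrite !inE /= andbC eq_sym.
Qed.

Lemma double_card_imset_sym (R : finType) (f : T * T -> R) (Q : {set T * T}) :
  (forall p, p \in Q -> [/\ p.1 != p.2, (p.2, p.1) \in Q & f (p.2, p.1) = f p]) ->
  (2 * #|f @: Q| <= #|Q|)%N.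
Proof.
move=> symQ; rewrite -[#|Q|]sum1_card (partition_big_imset f) /= mulnC -sum_nat_const.
apply: leq_sum => _ /imsetP[[a b] abQ ->]; have [/= ab baQ fba] := symQ _ abQ.
rewrite sum1_card; apply/card_gt1P; exists (a, b), (b, a).
by split; [apply/andP; split | apply/andP; split | rewrite xpair_eqE negb_and ab]; rewrite ?fba.
Qed.

Lemma card_bigcup_leq (I : finType) (P : pred I) (F : I -> {set T}) :
  (#|\bigcup_(i | P i) F i| <= \sum_(i | P i) #|F i|)%N.
Proof.
elim/big_ind2: _ => [|m A k B leAm leBk|]; rewrite ?cards0 //.
exact: leq_trans (leq_card_setU A B).1 (leq_add leAm leBk).
Qed.

Lemma exists_card_set t : (t <= #|T|)%N -> exists A : {set T}, #|A| = t.
Proof.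
by case/card_geqP=> sq [sq_uniq <- _]; exists [set x in sq]; rewrite cardsE (card_uniqP sq_uniq).
Qed.

End Counting.

Lemma mul_expn2_lt_expn3 m : (2 ^ m * m < 3 ^ m)%N.
Proof.
case: m => [|[|m]] //; elim: m => [|m IH] //.
have := expn_gt0 2 m.+2; rewrite !(expnS _ m.+2); nia.
Qed.

Section Graph.
Variables (V : finType) (adj : rel V).
Hypotheses (adj_sym : symmetric adj) (adj_irr : irreflexive adj).

Definition arcset (X : {set V}) :=
  [set p : V * V | [&& p.1 \in X, p.2 \in X & adj p.1 p.2]].
Definition nbhd (X : {set V}) := [set y | [exists x in X, adj x y]].

(* [arcset] counts ordered pairs, so [has_excess s X] says that [X] spans at least
   [#|X| - 1 + s] edges. *)
Definition has_excess s (X : {set V}) := (2 * #|X| + 2 * s <= #|arcset X| + 2)%N.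

Lemma in_nbhd X y : (y \in nbhd X) = [exists x in X, adj x y].
Proof. by rewrite inE. Qed.

Variable v : V.

Definition ball k := iter k (fun X => X :|: nbhd X) [set v].

Lemma ballS k : ball k.+1 = ball k :|: nbhd (ball k).
Proof. by []. Qed.

Lemma ball_mono k l : (k <= l)%N -> ball k \subset ball l.
Proof.
by move=> /subnK <-; elim: (l - k)%N => //= m IH; apply: subset_trans IH (subsetUl _ _).
Qed.

Lemma center_in_ball k : v \in ball k.
Proof. by apply: subsetP (ball_mono (leq0n k)) _ _; rewrite set11. Qed.

Section BFSTree.
Variable r : nat.

Definition depth x := find (fun k => x \in ball k) (iota 0 r.+1).

Lemma depthP x : x \in ball r ->
  [/\ (depth x <= r)%N, x \in ball (depth x) & forall k, (k < depth x)%N -> x \notin ball k].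
Proof.
move=> xr; have has_r : has (fun k => x \in ball k) (iota 0 r.+1).
  by apply/hasP; exists r; rewrite // mem_iota add0n ltnSn.
have lt_r : (depth x < r.+1)%N by move: has_r; rewrite has_find size_iota.
split=> [||k lt_k]; first by [].
  by have := nth_find 0 has_r; rewrite nth_iota.
by have := before_find 0 lt_k; rewrite nth_iota ?add0n ?(ltn_trans lt_k) // => ->.
Qed.

Lemma depth_le x k : (k <= r)%N -> x \in ball k -> (depth x <= k)%N.
Proof.
move=> kr xk; have [_ _ shallower] := depthP (subsetP (ball_mono kr) _ xk).
by rewrite leqNgt; apply/negP=> /shallower; rewrite xk.
Qed.

Lemma depth_eq0 x : x \in ball r -> (depth x == 0%N) = (x == v).
Proof.
move=> xr; have [_ xd _] := depthP xr; apply/idP/eqP => [/eqP d0|->].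
  by move: xd; rewrite d0 inE => /eqP.
by rewrite -leqn0 depth_le ?set11.
Qed.

Lemma depth_center : depth v = 0%N.
Proof. by apply/eqP; rewrite depth_eq0 ?center_in_ball. Qed.

Definition parent x := odflt v [pick y | (y \in ball (depth x).-1) && adj x y].

Lemma parent_center : parent v = v.
Proof.
rewrite /parent depth_center; case: pickP => //= y /andP[].
by rewrite inE => /eqP->; rewrite adj_irr.
Qed.

Lemma parentP x : x \in ball r -> x != v ->
  [/\ adj x (parent x), parent x \in ball r & (depth (parent x) < depth x)%N].
Proof.
move=> xr xv; have [dr xd shallower] := depthP xr.
have : depth x != 0%N by rewrite depth_eq0.
case ed : (depth x) => [|d] // _; rewrite ed in dr xd shallower.
move: xd; rewrite ballS inE (negbTE (shallower d (ltnSn d))) in_nbhd => /existsP[y /andP[yd ayx]].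
rewrite /parent ed /=; case: pickP => [z /andP[zd axz]|/(_ y)]; last by rewrite yd adj_sym ayx.
split=> //; first exact: subsetP (ball_mono (ltnW dr)) _ zd.
by rewrite ltnS depth_le // ltnW.
Qed.

Lemma parent_in_ball x : x \in ball r -> parent x \in ball r.
Proof.
move=> xr; have [->|xv] := eqVneq x v; first by rewrite parent_center center_in_ball.
by case: (parentP xr xv).
Qed.

Lemma iter_parent x i : x \in ball r ->
  iter i parent x \in ball r /\ (depth (iter i parent x) <= depth x - i)%N.
Proof.
move=> xr; elim: i => [|i [IHr IHd]] /=; first by rewrite subn0.
split; first exact: parent_in_ball.
have [->|xv] := eqVneq (iter i parent x) v; first by rewrite parent_center depth_center.
have [_ _ lt_d] := parentP IHr xv; lia.
Qed.

Definition ancestors x := [set iter i parent x | i : 'I_r.+1].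

Lemma ancestorsP x : x \in ball r -> [/\ v \in ancestors x, x \in ancestors x,
  ancestors x \subset ball r, (#|ancestors x| <= r.+1)%N &
  {in ancestors x, forall y, parent y \in ancestors x}].
Proof.
move=> xr; have [dr _ _] := depthP xr.
have root : iter r parent x = v.
  have [rr rd] := iter_parent r xr; apply/eqP; rewrite -depth_eq0 //; lia.
split.
- by apply/imsetP; exists ord_max.
- by apply/imsetP; exists ord0.
- by apply/subsetP=> _ /imsetP[i _ ->]; case: (iter_parent i xr).
- by rewrite (leq_trans (leq_imset_card _ _)) ?card_ord.
move=> _ /imsetP[i _ ->]; apply/imsetP; have [lt_ir|ge_ir] := ltnP i r.
  by exists (Ordinal (lt_ir : (i.+1 < r.+1)%N)).
have -> : nat_of_ord i = r by have := ltn_ord i; lia.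
by exists ord_max; rewrite //= root parent_center.
Qed.

Definition ancestor_closure (X : {set V}) : {set V} := \bigcup_(x in X) ancestors x.

Lemma ancestor_closureP (X : {set V}) : X \subset ball r -> X != set0 ->
  [/\ X \subset ancestor_closure X, v \in ancestor_closure X,
      ancestor_closure X \subset ball r, (#|ancestor_closure X| <= #|X| * r.+1)%N &
      {in ancestor_closure X, forall y, parent y \in ancestor_closure X}].
Proof.
move=> /subsetP Xr /set0Pn[x0 x0X]; split.
- by apply/subsetP=> x xX; apply/bigcupP; exists x => //; case: (ancestorsP (Xr x xX)).
- by apply/bigcupP; exists x0 => //; case: (ancestorsP (Xr x0 x0X)).
- by apply/bigcupsP=> x xX; case: (ancestorsP (Xr x xX)).
- rewrite (leq_trans (card_bigcup_leq _ _)) // -sum_nat_const leq_sum // => x xX.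
  by case: (ancestorsP (Xr x xX)).
move=> y /bigcupP[x xX yx]; apply/bigcupP; exists x => //.
by have [_ _ _ _ ->] := ancestorsP (Xr x xX).
Qed.

Definition tree_arcs (S : {set V}) :=
  [set (x, parent x) | x in S :\ v] :|: [set (parent x, x) | x in S :\ v].

Lemma card_tree_arcs (S : {set V}) : S \subset ball r -> v \in S ->
  (#|tree_arcs S| + 2 = 2 * #|S|)%N.
Proof.
move=> /subsetP Sr vS.
have Sv x : x \in S :\ v -> x \in ball r /\ x != v.
  by rewrite !inE => /andP[-> /Sr]; split.
have disj : [disjoint [set (x, parent x) | x in S :\ v] & [set (parent x, x) | x in S :\ v]].
  apply/pred0P=> p /=; apply/negP=> /andP[/imsetP[x /Sv[xr xv] ->] /imsetP[y /Sv[yr yv] [ex ey]]].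
  have [_ _] := parentP xr xv; have [_ _] := parentP yr yv; rewrite -ex ey; lia.
have := (leq_card_setU [set (x, parent x) | x in S :\ v] [set (parent x, x) | x in S :\ v]).2.
rewrite disj => /eqP->; rewrite !card_in_imset => [|x y _ _ [] //|x y _ _ [] //].
by rewrite [#|S|](cardsD1 v) vS; lia.
Qed.

Lemma tree_arcs_sub (S : {set V}) : S \subset ball r ->
  {in S, forall y, parent y \in S} -> tree_arcs S \subset arcset S.
Proof.
move=> /subsetP Sr Sp; apply/subsetP=> _ /setUP[] /imsetP[x] /setD1P[xv xS] ->;
  have [axp _ _] := parentP (Sr x xS) xv; by rewrite inE /= xS Sp // 1?adj_sym axp.
Qed.

Lemma excess_subgraph s : (0 < s)%N -> has_excess s (ball r) ->
  exists S : {set V}, [/\ v \in S, (#|S| <= 4 * s * r.+1)%N & has_excess s S].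
Proof.
rewrite /has_excess => s_gt0 excess; have cardT := card_tree_arcs (subxx _) (center_in_ball r).
set E := arcset (ball r) in excess *; set T := tree_arcs (ball r) in cardT *.
have : (2 * s <= #|E :\: T|)%N.
  have := cardsID T E; have := subset_leq_card (subsetIr E T); lia.
case/card_geqP=> sq [sq_uniq size_sq sqET]; set F := [set p in sq].
have cardF : #|F| = (2 * s)%N by rewrite cardsE (card_uniqP sq_uniq).
have FE p : p \in F -> p \in E /\ p \notin T.
  by rewrite inE => /sqET; rewrite inE => /andP[].
set X := [set p.1 | p in F] :|: [set p.2 | p in F].
have Xr : X \subset ball r.
  by apply/subsetP=> x /setUP[] /imsetP[p /FE[+ _] ->]; rewrite inE => /and3P[].
have X0 : X != set0.
  have : F != set0 by rewrite -card_gt0 cardF; lia.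
  by case/set0Pn=> p pF; apply/set0Pn; exists p.1; rewrite inE imset_f.
have cardX : (#|X| <= 2 * #|F|)%N.
  by rewrite (leq_trans (leq_card_setU _ _).1) // mul2n -addnn leq_add ?leq_imset_card.
have [XS vS Sr cardS Sp] := ancestor_closureP Xr X0.
set S := ancestor_closure X in XS vS Sr cardS Sp *.
exists S; split=> //.
  by apply: leq_trans cardS (leq_mul _ (leqnn _)); lia.
have FS : F \subset arcset S.
  apply/subsetP=> p pF; have [pE _] := FE p pF; move: pE; rewrite !inE => /and3P[_ _ ->].
  by rewrite !(subsetP XS) ?andbT // inE imset_f ?orbT.
have disj : [disjoint tree_arcs S & F].
  apply/pred0P=> p /=; apply/andP=> -[pTS /FE[_]]; apply/negP/negPn.
  by apply: subsetP pTS; rewrite setUSS ?imsetS ?setSD.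
have /subset_leq_card : tree_arcs S :|: F \subset arcset S by rewrite subUset tree_arcs_sub.
have := card_tree_arcs Sr vS; have := (leq_card_setU (tree_arcs S) F).2.
by rewrite disj => /eqP; lia.
Qed.

End BFSTree.

Section Regular.
Variable t : nat.
Hypothesis adj_regular : forall x, #|[set y | adj x y]| = t.

Lemma regular_boundary (X : {set V}) :
  (t * #|X| <= t * #|nbhd X :\: X| + #|arcset X|)%N.
Proof.
set out := [set p : V * V | [&& p.1 \in X, p.2 \notin X & adj p.1 p.2]].
have degX : (t * #|X| = #|arcset X| + #|out|)%N.
  rewrite (card_pairs (fun a b => [&& a \in X, b \in X & adj a b])).
  rewrite (card_pairs (fun a b => [&& a \in X, b \notin X & adj a b])) -big_split /=.
  rewrite mulnC -sum_nat_const big_mkcond; apply: eq_bigr => x _ /=.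
  case: ifP => _; last by rewrite !(@eq_card0 _ [set y | _]) // => y; rewrite inE.
  by rewrite -(adj_regular x) -(cardsID X); congr (_ + _)%N; apply: eq_card => y;
    rewrite !inE andbC.
have outX : (#|out| <= t * #|nbhd X :\: X|)%N.
  rewrite (card_pairs_swap (fun a b => [&& a \in X, b \notin X & adj a b])).
  rewrite (card_pairs (fun b a => [&& a \in X, b \notin X & adj a b])).
  rewrite mulnC -sum_nat_const [X in (_ <= X)%N]big_mkcond; apply: leq_sum => y _ /=.
  case: ifP => [_|]; first by rewrite -(adj_regular y) subset_leq_card //;
    apply/subsetP=> x; rewrite !inE adj_sym => /and3P[].
  rewrite leqn0 cards_eq0 inE in_nbhd => /negbT; apply: contraNT => /set0Pn[x].
  by rewrite inE => /and3P[xX -> axy]; apply/existsP; exists x; rewrite xX.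
lia.
Qed.

Lemma low_excess_expands s (X : {set V}) : (4 * (s + t + 1) <= t * t.+1)%N ->
  (t < #|X|)%N -> ~~ has_excess s X -> (3 * #|X| <= 2 * #|X :|: nbhd X|)%N.
Proof.
rewrite /has_excess -ltnNge => ts tX lowX; have := regular_boundary X.
have := cardsUI X (nbhd X); have := cardsID X (nbhd X); rewrite setIC.
nia.
Qed.

Lemma card_ball_gt k : (t < #|ball k.+1|)%N.
Proof.
apply: leq_trans (subset_leq_card (ball_mono (ltn0Sn k))).
have -> : ball 1 = v |: [set y | adj v y].
  apply/setP=> y; rewrite ballS !inE; congr (_ || _); apply/existsP/idP.
    by case=> x /andP[]; rewrite inE => /eqP->.
  by exists v; rewrite inE eqxx.
by rewrite cardsU1 inE adj_irr adj_regular.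
Qed.

Lemma ball_excess s : (4 * (s + t + 1) <= t * t.+1)%N ->
  exists j, (3 ^ j <= 2 ^ j * #|V|)%N /\ has_excess s (ball j.+1).
Proof.
move=> ts; pose excess j := has_excess s (ball j.+1).
have stops : exists j, excess j || (2 ^ j * #|V| < 3 ^ j)%N.
  by exists #|V|; rewrite mul_expn2_lt_expn3 orbT.
case: (ex_minnP stops) => j stop_j min_j.
have grow i : (i <= j)%N -> (3 ^ i * t.+1 <= 2 ^ i * #|ball i.+1|)%N.
  elim: i => [|i IH] lt_ij; first by rewrite !mul1n card_ball_gt.
  have /norP[low _] : ~~ (excess i || (2 ^ i * #|V| < 3 ^ i)%N).
    by apply/negP=> /min_j; rewrite leqNgt lt_ij.
  have := low_excess_expands ts (card_ball_gt i) low; rewrite -ballS.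
  have := IH (ltnW lt_ij); rewrite !expnS; nia.
have bounded : (3 ^ j <= 2 ^ j * #|V|)%N.
  apply: leq_trans (leq_pmulr _ (ltn0Sn t)) (leq_trans (grow j (leqnn j)) _).
  by rewrite leq_mul2l max_card orbT.
by exists j; split=> //; move: stop_j; rewrite ltnNge bounded orbF.
Qed.

End Regular.
End Graph.

Section ProperColoring.
Variables (V K : finType) (c : V -> V -> K).
Hypotheses (c_sym : forall u v, c u v = c v u)
  (c_proper : forall u v w, u != v -> u != w -> c u v = c u w -> v = w).

Definition colors (S : {set V}) := [set c u v | u in S, v in S & u != v].

Lemma colorsP (S : {set V}) a :
  reflect (exists u v, [/\ u \in S, v \in S, u != v & a = c u v]) (a \in colors S).
Proof.
apply: (iffP imset2P) => [[u v uS]|[u [v [uS vS uv ->]]]].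
  by rewrite inE => /andP[vS uv] ->; exists u, v.
by exists u v => //; rewrite inE vS uv.
Qed.

Lemma colors_setU1 (S : {set V}) w : w \notin S ->
  colors (w |: S) \subset colors S :|: c w @: S.
Proof.
move=> wS; apply/subsetP=> _ /colorsP[x [y [+ + + ->]]].
rewrite !inE => /predU1P[->|xS] /predU1P[->|yS] xy; first by rewrite eqxx in xy.
- by rewrite imset_f ?orbT.
- by rewrite c_sym imset_f ?orbT.
by apply/orP; left; apply/colorsP; exists x, y.
Qed.

Lemma card_colors_setU1 (S : {set V}) w : w \notin S ->
  (#|colors (w |: S)| + #|colors S :&: c w @: S| <= #|colors S| + #|S|)%N.
Proof.
move=> wS; have := subset_leq_card (colors_setU1 wS).
have := cardsUI (colors S) (c w @: S); have := leq_imset_card (c w) S; lia.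
Qed.

Section ColorClasses.
Variable A : {set K}.

Definition class_adj : rel V := fun x y => (x != y) && (c x y \in A).

Lemma class_adj_sym : symmetric class_adj.
Proof. by move=> x y; rewrite /class_adj eq_sym c_sym. Qed.

Lemma class_adj_irr : irreflexive class_adj.
Proof. by move=> x; rewrite /class_adj eqxx. Qed.

(* A colour of [S] outside [A] is carried by both orientations of some edge of [S]. *)
Lemma card_colors_class (S : {set V}) :
  (2 * #|colors S| + #|arcset class_adj S| <= 2 * #|A| + #|S| * #|S|.-1)%N.
Proof.
set f := fun p : V * V => c p.1 p.2.
set Q := [set p : V * V | [&& p.1 \in S, p.2 \in S, p.1 != p.2 & f p \notin A]].
have sub : colors S \subset A :|: f @: Q.
  apply/subsetP=> _ /colorsP[x [y [xS yS xy ->]]]; rewrite inE.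
  case: (boolP (c x y \in A)) => //= cxy; apply/imsetP; exists (x, y) => //.
  by rewrite inE /= xS yS xy.
have half : (2 * #|f @: Q| <= #|Q|)%N.
  apply: double_card_imset_sym => -[x y]; rewrite !inE /f /= c_sym eq_sym.
  by case/and4P=> -> -> -> ->.
have splitQ : (#|Q| + #|arcset class_adj S| = #|S| * #|S|.-1)%N.
  rewrite -card_offdiag -(cardsID [set p : V * V | f p \in A]
    [set p : V * V | [&& p.1 \in S, p.2 \in S & p.1 != p.2]]) [RHS]addnC.
  congr (_ + _)%N; apply: eq_card => -[x y]; rewrite !inE /class_adj /f /=;
    by case: (x \in S); case: (y \in S); case: (x != y); case: (c x y \in A).
have := subset_leq_card sub; have := (leq_card_setU A (f @: Q)).1; lia.
Qed.

End ColorClasses.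

Hypothesis card_K : #|K| = #|V|.-1.

Lemma color_onto u a : exists2 y, y != u & c u y = a.
Proof.
have inj : {in [set~ u] &, injective (c u)}.
  by move=> y z; rewrite !inE => yu zu; apply: c_proper; rewrite eq_sym.
have : c u @: [set~ u] = [set: K].
  by apply/eqP; rewrite eqEcard subsetT /= card_in_imset // cardsC1 cardsT card_K.
move/setP/(_ a); rewrite inE => /imsetP[y]; rewrite !inE => yu ->.
by exists y.
Qed.

(* Every colour appears at [s0]; if no edge leaving [S] has a colour of [S], then each colour
   of [S] appears at [s0] on an edge inside [S]. *)
Lemma card_colors_closed (S : {set V}) s0 : s0 \in S ->
  (forall w s, w \notin S -> s \in S -> c w s \notin colors S) -> (#|colors S| < #|S|)%N.
Proof.
move=> s0S closed; have : colors S \subset c s0 @: (S :\ s0).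
  apply/subsetP=> a; have [y ys0 <-] := color_onto s0 a => aS.
  case yS: (y \in S); first by rewrite imset_f // !inE ys0.
  by rewrite c_sym (negbTE (closed y s0 (negbT yS) s0S)) in aS.
move/subset_leq_card/leq_trans/(_ (leq_imset_card _ _)).
by rewrite [#|S|](cardsD1 s0) s0S.
Qed.

Lemma low_colors_setU1 (S : {set V}) k : #|S| = k.+1 -> (k.+1 < #|V|)%N ->
  (k.+1 + #|colors S| <= 'C(k.+1, 2) + 3)%N ->
  exists S' : {set V}, #|S'| = k.+2 /\ (k.+2 + #|colors S'| <= 'C(k.+2, 2) + 3)%N.
Proof.
move=> cardS ltSV lowS; have bin_k2 : 'C(k.+2, 2) = ('C(k.+1, 2) + k.+1)%N by rewrite binS bin1.
have cardSU1 w : w \notin S -> #|w |: S| = k.+2 by move=> wS; rewrite cardsU1 wS cardS.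
case: (boolP [exists w, [exists s in S, (w \notin S) && (c w s \in colors S)]]).
  case/existsP=> w /existsP[s /and3P[sS wS cws]]; exists (w |: S); split; first exact: cardSU1.
  have : (0 < #|colors S :&: c w @: S|)%N.
    by apply/card_gt0P; exists (c w s); rewrite inE cws imset_f.
  by have := card_colors_setU1 wS; lia.
rewrite negb_exists => /forallP no_repeat.
have closed w s : w \notin S -> s \in S -> c w s \notin colors S.
  move=> wS sS; apply: contraNN (no_repeat w) => cws.
  by apply/existsP; exists s; rewrite sS wS.
have [s0 s0S] : exists s0, s0 \in S by apply/card_gt0P; rewrite cardS.
have /card_gt0P[w] : (0 < #|~: S|)%N by have := cardsC S; lia.
rewrite inE => wS.
exists (w |: S); split; first exact: cardSU1.
have := card_colors_closed s0S closed; have := card_colors_setU1 wS.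
have : (2 * k <= 'C(k.+1, 2) + 1)%N.
  case: k {cardS ltSV lowS bin_k2 cardSU1} => [|[|k]] //.
  by have := mul_bin_diag k.+3 1; rewrite bin1 /=; nia.
rewrite cardS; lia.
Qed.

Lemma low_colors_set k : (0 < k <= #|V|)%N ->
  exists S : {set V}, #|S| = k /\ (k + #|colors S| <= 'C(k, 2) + 3)%N.
Proof.
elim: k => [|[|k] IH] // /andP[_ le_kV].
  have /card_gt0P[u _] : (0 < #|V|)%N by [].
  exists [set u]; rewrite cards1; split=> //.
  suff -> : colors [set u] = set0 by rewrite cards0.
  apply/setP=> a; rewrite inE; apply/colorsP=> -[x [y []]].
  by rewrite !inE => /eqP-> /eqP-> /eqP.
by have [S [cardS lowS]] := IH (ltnW le_kV); apply: low_colors_setU1 lowS.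
Qed.

Lemma class_adj_regular (A : {set K}) x : #|[set y | class_adj A x y]| = #|A|.
Proof.
have inj : {in [set y | class_adj A x y] &, injective (c x)}.
  by move=> y z; rewrite !inE => /andP[xy _] /andP[xz _]; apply: c_proper.
rewrite -(card_in_imset inj); apply: eq_card => a.
apply/imsetP/idP => [[y] /[!inE] /andP[_ ?] -> //|aA].
have [y yx cxy] := color_onto x a; exists y => //.
by rewrite inE /class_adj eq_sym yx cxy aA.
Qed.

End ProperColoring.

Section LogBound.
Local Open Scope R_scope.

Lemma INR_expn a j : INR (a ^ j)%N = INR a ^ j.
Proof. by elim: j => [|j IH] //; rewrite expnS mulnE mult_INR IH. Qed.

Lemma ln_le x y : 0 < x -> x <= y -> ln x <= ln y.
Proof.
move=> x_gt0 /Rle_lt_or_eq_dec[lt_xy|->]; last exact: Rle_refl.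
exact: Rlt_le (ln_increasing _ _ x_gt0 lt_xy).
Qed.

Lemma ln3_gt_ln2 : 0 < ln 3 - ln 2.
Proof. have := ln_increasing 2 3; lra. Qed.

Lemma ln_expn_bound j n : (3 ^ j <= 2 ^ j * n)%N -> (0 < n)%N ->
  INR j * (ln 3 - ln 2) <= ln (INR n).
Proof.
move=> /leP/le_INR; rewrite mulnE mult_INR !INR_expn => le_pow /ltP/lt_0_INR n_gt0.
have [e3 e2] : INR 3 = 3 /\ INR 2 = 2 by split; simpl; lra.
rewrite e3 e2 in le_pow; have := ln_le (pow_lt 3 j ltac:(lra)) le_pow.
by rewrite ln_mult ?ln_pow //; [lra | lra | lra | apply: pow_lt; lra].
Qed.

Definition log_const (s : nat) : R := 4 * INR s * (/ (ln 3 - ln 2) + 2).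

Lemma log_const_gt0 s : (0 < s)%N -> 0 < log_const s.
Proof.
move=> /ltP/lt_0_INR s_gt0; have := Rinv_0_lt_compat _ ln3_gt_ln2.
rewrite /log_const; nra.
Qed.

Lemma le_log_const j k n s : (3 <= n)%N -> (3 ^ j <= 2 ^ j * n)%N ->
  (k <= 4 * s * (j + 2))%N -> INR k <= log_const s * ln (INR n).
Proof.
move=> n_ge3 pow_jn /leP/le_INR; rewrite !mult_INR plus_INR /= => le_k.
have /le_INR n3 : (3 <= n)%coq_nat by apply/leP.
have ln_n : 1 <= ln (INR n).
  rewrite -(ln_exp 1); apply: ln_le; [exact: exp_pos | have := exp_le_3; simpl in n3; lra].
have := ln_expn_bound pow_jn (leq_trans (isT : 0 < 3)%N n_ge3).
have := ln3_gt_ln2; have := pos_INR s; rewrite /log_const.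
set l := ln 3 - ln 2 => l_gt0 s_ge0 jl.
have j_le : INR j <= ln (INR n) * / l.
  by apply/(Rmult_le_reg_r l) => //; rewrite Rmult_assoc Rinv_l; lra.
have : INR j + 2 <= ln (INR n) * (/ l + 2) by nra.
nra.
Qed.
End LogBound.

Lemma gamma_colors n (c : 'I_n -> 'I_n -> 'I_n.-1) (S : {set 'I_n}) :
  gamma c S = #|colors c S|.
Proof. by []. Qed.

(* The colour classes of t colours form a t-regular graph, and a subgraph S of excess
   s = t + dd + 1 has deficit at least |S| + dd; t = 4 dd + 12 is large enough for [ball_excess]. *)
Lemma log_size_deficit_set dd : exists C : R, Rlt 0 C /\ exists n0 : nat,
  forall n : nat, (n0 <= n)%N -> forall c : 'I_n -> 'I_n -> 'I_n.-1, one_factorization c ->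
  exists S : {set 'I_n}, (1 <= #|S|)%N /\ Rle (INR #|S|) (Rmult C (ln (INR n))) /\
    (#|S| + dd + gamma c S <= 'C(#|S|, 2))%N.
Proof.
pose t := (4 * dd + 12)%N; pose s := (t + dd + 1)%N.
have s_gt0 : (0 < s)%N by rewrite /s addn1.
exists (log_const s); split; first exact: log_const_gt0.
exists (t + 3)%N => n le_n c [c_sym c_proper].
have card_K : #|'I_n.-1| = #|'I_n|.-1 by rewrite !card_ord.
have [A cardA] : exists A : {set 'I_n.-1}, #|A| = t.
  by apply: exists_card_set; rewrite card_ord; lia.
have regular x : #|[set y | class_adj c A x y]| = t.
  by rewrite -cardA (class_adj_regular c_proper card_K).
have n_gt0 : (0 < n)%N by lia.
have [|j [pow_j excess]] := ball_excess (class_adj_sym c_sym A) (class_adj_irr c A)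
  (Ordinal n_gt0) regular (s := s); first by nia.
rewrite card_ord in pow_j.
have [S [vS cardS arcsS]] := excess_subgraph (class_adj_sym c_sym A) (class_adj_irr c A)
  s_gt0 excess.
exists S; split; first by apply/card_gt0P; exists (Ordinal n_gt0).
split; first by apply: le_log_const pow_j _; [lia | rewrite addn2].
have gammaS : (2 * #|colors c S| + #|arcset (class_adj c A) S| <= 2 * t + #|S| * #|S|.-1)%N.
  by rewrite -cardA; apply: card_colors_class.
have bin2S : (#|S| * #|S|.-1 = 2 * 'C(#|S|, 2))%N by rewrite -mul_bin_diag bin1.
rewrite /has_excess gamma_colors bin2S /s /t in gammaS arcsS *.
(* [#|S|] occurs elaborated in two ways (one through a coercion); [set] merges them for [lia]. *)
set k := #|S| in gammaS arcsS *; lia.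
Qed.

Import Order.TTheory GRing.Theory Num.Theory.
Local Open Scope ring_scope.

Theorem theorem4 :
  (forall (n k : nat), ~~ odd n -> (4 <= k <= n)%N ->
     forall c : 'I_n -> 'I_n -> 'I_n.-1, one_factorization c ->
     exists S : {set 'I_n}, #|S| = k /\ (k%:Z - 3 <= deficit c S)%R)
  /\
  (forall d : int, (-2 <= d)%R ->
     exists C : R, Rlt 0 C /\
     exists n0 : nat, forall n : nat, ~~ odd n -> (n0 <= n)%N ->
       forall c : 'I_n -> 'I_n -> 'I_n.-1, one_factorization c ->
       exists S : {set 'I_n}, (1 <= #|S|)%N /\
         Rle (INR #|S|) (Rmult C (ln (INR n))) /\
         ((#|S|)%:Z + d <= deficit c S)%R).
Proof.
split.
  move=> n k _ /andP[le4k le_kn] c [c_sym c_proper].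
  have card_K : #|'I_n.-1| = #|'I_n|.-1 by rewrite !card_ord.
  have [|S [cardS lowS]] := low_colors_set c_sym c_proper card_K (k := k).
    by rewrite card_ord le_kn (leq_trans _ le4k).
  by exists S; split => //; rewrite /deficit gamma_colors cardS; lia.
move=> d _; have [C [C_gt0 [n0 large]]] := log_size_deficit_set `|d|%N.
exists C; split => //; exists n0 => n _ le_n c c1f.
have [S [S_gt0 [S_log S_def]]] := large n le_n c c1f.
exists S; do 2!split => //; rewrite /deficit.
have : (d <= `|d|%N%:Z)%R by lia.
lia.
Qed.
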